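(* A linkage matching field is uniquely determined by its set of Chow covectors: if $\mathcal{M}$ and $\mathcal{M}'$ are linkage $(n,d)$-matching fields on $L\sqcup R$ ($n\ge d$) with $\{\Omega_\rho(\mathcal{M})\}_\rho=\{\Omega_\rho(\mathcal{M}')\}_\rho$, then $\mathcal{M}=\mathcal{M}'$.
   Context: $L=\{\ell_1,\dots,\ell_n\}$, $R=\{r_1,\dots,r_d\}$; graphs are bipartite on $L\sqcup R$ identified with edge sets. An $(n,d)$-matching field $\mathcal{M}=(M_\sigma)$ assigns to each $d$-subset $\sigma\subseteq L$ a perfect matching $M_\sigma$ between $\sigma$ and $R$; it is linkage if for every $r_i\in R$ and every $(d+1)$-subset $\tau\subseteq L$ there exist distinct $\ell_j,\ell_{j'}\in\tau$ with $M_{\tau\setminus\{\ell_j\}}$ and $M_{\tau\setminus\{\ell_{j'}\}}$ agreeing except on the edges incident with $r_i$. For an $(n-d+1)$-subset $\rho\subseteq L$, the Chow covector $\Omega_\rho(\mathcal{M})$ is the graph with edges $(\ell_j,r)$ for $\ell_j\in\rho$, where $r$ is the node matched to $\ell_j$ in $M_{(L\setminus\rho)\cup\{\ell_j\}}$. *)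

(* L = 'I_n (nodes l_1..l_n), R = 'I_d (nodes r_1..r_d).
   A bipartite graph on L ⊔ R is identified with its edge set {set 'I_n * 'I_d}. *)
From mathcomp Require Import all_boot.
Set Implicit Arguments. Unset Strict Implicit. Unset Printing Implicit Defensive.

Definition graph (n d : nat) := {set ('I_n * 'I_d)}.

Definition perfect_matching (n d : nat) (sigma : {set 'I_n}) (E : graph n d) : bool :=
  [&& [forall e in E, e.1 \in sigma],
      [forall l in sigma, #|[set r : 'I_d | (l, r) \in E]| == 1] &
      [forall r : 'I_d, #|[set l : 'I_n | (l, r) \in E]| == 1]].

(* An (n,d)-matching field: assigns to each d-subset sigma of L a perfect
   matching M sigma between sigma and R (values on other subsets are irrelevant). *)
Definition matching_field (n d : nat) (M : {set 'I_n} -> graph n d) : Prop :=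
  forall sigma : {set 'I_n}, #|sigma| = d -> perfect_matching sigma (M sigma).

Definition drop_at (n d : nat) (E : graph n d) (r : 'I_d) : graph n d :=
  [set e in E | e.2 != r].

Definition linkage (n d : nat) (M : {set 'I_n} -> graph n d) : Prop :=
  forall (r : 'I_d) (tau : {set 'I_n}), #|tau| = d.+1 ->
    exists j j' : 'I_n, [/\ j \in tau, j' \in tau, j != j' &
      drop_at (M (tau :\ j)) r = drop_at (M (tau :\ j')) r].

Definition chow_covector (n d : nat) (M : {set 'I_n} -> graph n d)
    (rho : {set 'I_n}) : graph n d :=
  [set e : 'I_n * 'I_d | (e.1 \in rho) && (e \in M ((~: rho) :|: [set e.1]))].

Definition chow_covectors (n d : nat) (M : {set 'I_n} -> graph n d) : {set graph n d} :=
  [set chow_covector M rho | rho in [set rho : {set 'I_n} | #|rho| == n - d + 1]].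

(* The Chow covector Omega_rho has rho as its set of left vertices, so the set
   of Chow covectors determines the map rho |-> Omega_rho.  For l in sigma the
   set rho := (L \ sigma) + l satisfies (L \ rho) + l = sigma, hence the edges
   of Omega_rho at l are exactly the edges of M_sigma at l: each M_sigma is read
   off from the Chow covectors. *)
From mathcomp Require Import all_boot.
From mathcomp Require Import zify.

Set Implicit Arguments.
Unset Strict Implicit.
Unset Printing Implicit Defensive.

Definition left_support (n d : nat) (E : graph n d) : {set 'I_n} :=
  [set e.1 | e in E].

Lemma setCU1K (n : nat) (A : {set 'I_n}) (l : 'I_n) :
  l \in A -> ~: (~: A :|: [set l]) :|: [set l] = A.
Proof.
move=> lA; apply/setP => x; rewrite !inE negb_or negbK.
by case: (eqVneq x l) => [->|]; rewrite ?lA ?andbT ?orbF ?orbT.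
Qed.

Lemma card_setCU1 (n : nat) (A : {set 'I_n}) (l : 'I_n) :
  l \in A -> #|~: A :|: [set l]| = n - #|A| + 1.
Proof.
by move=> lA; rewrite setUC cardsU1 in_setC lA cardsCs setCK card_ord /= addnC.
Qed.

Lemma perfect_matching_partner (n d : nat) (sigma : {set 'I_n}) (E : graph n d)
    (l : 'I_n) :
  perfect_matching sigma E -> l \in sigma -> exists r, (l, r) \in E.
Proof.
case/and3P => _ /forall_inP partner _ /partner /eqP card1.
have /set0Pn [r] : [set r | (l, r) \in E] != set0 by rewrite -card_gt0 card1.
by rewrite inE; exists r.
Qed.

Lemma perfect_matching_sub (n d : nat) (sigma : {set 'I_n}) (E : graph n d)
    (e : 'I_n * 'I_d) :
  perfect_matching sigma E -> e \in E -> e.1 \in sigma.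
Proof. by case/and3P => /forall_inP inS _ _ /inS. Qed.

Lemma left_support_chow_covector (n d : nat) (M : {set 'I_n} -> graph n d)
    (rho : {set 'I_n}) :
  d <= n -> matching_field M -> #|rho| = n - d + 1 ->
  left_support (chow_covector M rho) = rho.
Proof.
move=> le_dn mfM card_rho; apply/setP => l; apply/imsetP/idP.
  by case=> e; rewrite inE => /andP [rho_e _] ->.
move=> rho_l.
have card_sigma : #|~: rho :|: [set l]| = d.
  have := max_card rho; rewrite card_setCU1 // card_ord; lia.
have sigma_l : l \in ~: rho :|: [set l] by rewrite setUC setU11.
have [r Mr] := perfect_matching_partner (mfM _ card_sigma) sigma_l.
by exists (l, r); rewrite // inE rho_l.
Qed.

Lemma chow_covector_eq (n d : nat) (M M' : {set 'I_n} -> graph n d)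
    (rho : {set 'I_n}) :
  d <= n -> matching_field M -> matching_field M' ->
  chow_covectors M = chow_covectors M' -> #|rho| = n - d + 1 ->
  chow_covector M rho = chow_covector M' rho.
Proof.
move=> le_dn mfM mfM' eqC card_rho.
have : chow_covector M rho \in chow_covectors M'.
  by rewrite -eqC; apply/imsetP; exists rho; rewrite // inE card_rho.
case/imsetP => rho'; rewrite inE => /eqP card_rho' eq_rho.
have same_rho : rho = rho'.
  rewrite -(left_support_chow_covector le_dn mfM card_rho) eq_rho.
  exact: left_support_chow_covector le_dn mfM' card_rho'.
by rewrite eq_rho same_rho.
Qed.

Lemma matching_from_chow_covectors (n d : nat) (M : {set 'I_n} -> graph n d)
    (sigma : {set 'I_n}) :
  perfect_matching sigma (M sigma) ->
  M sigma = [set e | (e.1 \in sigma) &&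
                     (e \in chow_covector M (~: sigma :|: [set e.1]))].
Proof.
move=> pmM; apply/setP => e; rewrite /chow_covector !inE eqxx orbT /=.
case: (boolP (e.1 \in sigma)) => [sigma_e | /negP sigma'e].
  by rewrite setCU1K.
by apply/negP => /(perfect_matching_sub pmM).
Qed.

Theorem corollary3p24 (n d : nat) (M M' : {set 'I_n} -> graph n d) :
  d <= n ->
  matching_field M -> matching_field M' ->
  linkage M -> linkage M' ->
  chow_covectors M = chow_covectors M' ->
  forall sigma : {set 'I_n}, #|sigma| = d -> M sigma = M' sigma.
Proof.
move=> le_dn mfM mfM' _ _ eqC sigma card_sigma.
rewrite (matching_from_chow_covectors (mfM _ card_sigma)).
rewrite (matching_from_chow_covectors (mfM' _ card_sigma)).
apply: eq_finset => e; case: (boolP (e.1 \in sigma)) => //= sigma_e.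
by rewrite (chow_covector_eq le_dn mfM mfM' eqC) // card_setCU1 ?card_sigma.
Qed.
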